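(* The InDC-BE method with $M$ uniform quadrature nodes excluding the left-most point and $K$ correction steps is an implicit Runge–Kutta method (with $(K+1)M$ stages) which is stiffly accurate and whose coefficient matrix $A$ in the Butcher tableau is invertible. In particular, for $K=1$ (normalizing the time step to $1$), $$A=\begin{pmatrix}T&Z\\P&T\end{pmatrix},$$ where $Z$ is the $M\times M$ zero matrix, $T$ is the $M\times M$ matrix with $T_{ij}=1/M$ for $j\le i$ and $T_{ij}=0$ for $j>i$, and $P_{ij}=\tilde S_{ij}-\frac1M$ for $j\le i$, $P_{ij}=\tilde S_{ij}$ for $j>i$.
   Context: InDC-BE for an ODE $y'=f(y)$ over one step of size $H$: nodes $\tau_m=t_n+mh$, $h=H/M$; $\alpha_j$ ($j=1,\dots,M$) the Lagrange basis polynomials of degree $M-1$ for $\tau_1,\dots,\tau_M$; $S^m(\bar w)=\frac1h\sum_jw_j\int_{\tau_m}^{\tau_{m+1}}\alpha_j$. Prediction: $y^{(0)}_{m+1}=y^{(0)}_m+hf(y^{(0)}_{m+1})$; correction: $y^{(k)}_{m+1}=y^{(k)}_m+h[f(y^{(k)}_{m+1})-f(y^{(k-1)}_{m+1})]+hS^m((f(y^{(k-1)}_j))_{j=1}^M)$, with $y^{(k)}_0=y_n$, output $y_{n+1}=y^{(K)}_M$. Viewed as an RK method, the stages are the values $y^{(k)}_m$, $k=0,\dots,K$, $m=1,\dots,M$. A RK method is stiffly accurate if $b^T$ equals the last row of $A$. $\tilde S_{ij}=\int_0^{i/M}\ell_j(s)\,ds$ where $\ell_j$ are the Lagrange basis polynomials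 of degree $M-1$ for the nodes $1/M,2/M,\dots,1$. *)

From HB Require Import structures.
From mathcomp Require Import all_boot all_order all_algebra.
Set Implicit Arguments. Unset Strict Implicit. Unset Printing Implicit Defensive.
Import Order.TTheory GRing.Theory Num.Theory.
Local Open Scope ring_scope.

Section InDC.
Variable R : realFieldType.

Definition poly_antideriv (p : {poly R}) : {poly R} :=
  \poly_(i < (size p).+1) (if i is i'.+1 then p`_i' / i%:R else 0).

Definition poly_integral (p : {poly R}) (a b : R) : R :=
  (poly_antideriv p).[b] - (poly_antideriv p).[a].

Definition lagrange_basis (M : nat) (x : 'I_M -> R) (j : 'I_M) : {poly R} :=
  \prod_(i < M | i != j) ((x j - x i)^-1 *: ('X - (x i)%:P)).

Definition tau (M : nat) (tn H : R) (m : nat) : R := tn + m%:R * (H / M%:R).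

(* alpha_j, j = 1..M (0-based index j : 'I_M stands for node tau_(j+1)). *)
Definition alpha (M : nat) (tn H : R) (j : 'I_M) : {poly R} :=
  lagrange_basis (fun i : 'I_M => tau M tn H i.+1) j.

Definition Sop (M : nat) (tn H : R) (m : nat) (w : 'I_M -> R) : R :=
  (H / M%:R)^-1 * \sum_(j < M) w j * poly_integral (alpha tn H j) (tau M tn H m) (tau M tn H m.+1).

(* The InDC-BE equations over one step.  Y k j is y^{(k)}_{j+1}
   (k = 0..K, j = 0..M-1); y^{(k)}_0 = yn. *)
Definition indc_prev (M K : nat) (yn : R) (Y : 'I_K.+1 -> 'I_M -> R)
    (k : 'I_K.+1) (j : 'I_M) : R :=
  match j with
  | Ordinal 0 _ => yn
  | Ordinal j'.+1 Hj => Y k (Ordinal (ltnW Hj))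
  end.

Definition InDC_BE (M K : nat) (f : R -> R) (tn H yn : R)
    (Y : 'I_K.+1 -> 'I_M -> R) : Prop :=
  let h := H / M%:R in
  (forall j : 'I_M, Y ord0 j = indc_prev yn Y ord0 j + h * f (Y ord0 j)) /\
  (forall (k : 'I_K) (j : 'I_M),
     Y (lift ord0 k) j = indc_prev yn Y (lift ord0 k) j
        + h * (f (Y (lift ord0 k) j) - f (Y (widen_ord (leqnSn K) k) j))
        + h * Sop tn H j (fun i => f (Y (widen_ord (leqnSn K) k) i))).

(* Stage equations of an RK method with coefficient matrix A, the stages being
   ordered as (k, m) |-> k * M + m (i.e. mxvec_index k m). *)
Definition RK_stages (M K : nat) (A : 'M[R]_(K.+1 * M)) (f : R -> R) (H yn : R)
    (Y : 'I_K.+1 -> 'I_M -> R) : Prop :=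
  forall (k : 'I_K.+1) (i : 'I_M),
    Y k i = yn + H * \sum_(l < K.+1) \sum_(j < M)
                       A (mxvec_index k i) (mxvec_index l j) * f (Y l j).

Definition RK_output (M K : nat) (b : 'rV[R]_(K.+1 * M)) (f : R -> R) (H yn : R)
    (Y : 'I_K.+1 -> 'I_M -> R) : R :=
  yn + H * \sum_(l < K.+1) \sum_(j < M) b 0 (mxvec_index l j) * f (Y l j).

(* Normalized Lagrange basis l_j for nodes 1/M, ..., M/M and
   tilde S_{ij} = int_0^{i/M} l_j  (0-based: row i stands for i+1). *)
Definition ell (M : nat) (j : 'I_M) : {poly R} :=
  lagrange_basis (fun i : 'I_M => i.+1%:R / M%:R) j.

Definition Stilde (M : nat) (i j : 'I_M) : R :=
  poly_integral (ell j) 0 (i.+1%:R / M%:R).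

Definition Tmat (M : nat) (i j : 'I_M) : R := if (j <= i)%N then M%:R^-1 else 0.

Definition Pmat (M : nat) (i j : 'I_M) : R :=
  if (j <= i)%N then Stilde i j - M%:R^-1 else Stilde i j.

Definition blockA1 (M : nat) (k l : nat) (i j : 'I_M) : R :=
  if k == l then Tmat i j
  else if (k == 1%N) && (l == 0%N) then Pmat i j else 0.

End InDC.

From HB Require Import structures.
From mathcomp Require Import all_boot all_order all_algebra.
From mathcomp Require Import ring lra zify.
Import Order.TTheory GRing.Theory Num.Theory.
Local Open Scope ring_scope.

(* Summing the InDC-BE recurrences of a sweep over m turns them into stage
   equations y^(k)_i = y_n + H sum_l sum_j A_(ki,lj) f(y^(l)_j): the
   backward-Euler terms accumulate into the cumulative-sum matrix T (weight 1/M),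
   and the accumulated quadrature terms S^0 + ... + S^i are integrals of alpha_j
   from t_n to tau_(i+1), which the affine change of variables t = t_n + H s
   turns into H * Stilde_(ij).  Hence A is block lower bidiagonal with diagonal
   blocks T and subdiagonal blocks Stilde - T = P.  In the flattened stage order
   A is lower triangular with diagonal 1/M, so it is invertible, and the output
   y^(K)_M is the last stage, so b is the last row of A. *)

Lemma index_allpairs (S T : eqType) (s : seq S) (t : seq T) x y :
  x \in s -> y \in t ->
  index (x, y) [seq (a, b) | a <- s, b <- t] = (index x s * size t + index y t)%N.
Proof.
move=> xs yt; elim: s xs => [//|a s IH] /=.
rewrite index_cat in_cons.
case: (eqVneq x a) => [->|nxa] /=; first move=> _.
  have inj : injective (fun b : T => (a, b)) by move=> b b' [].
  by rewrite index_map // (map_f (fun b => (a,b)) yt) mul0n add0n.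
move=> xs; have -> : (x, y) \in [seq (a, b0) | b0 <- t] = false.
  by apply/negbTE/mapP => -[b _ [E _]]; rewrite E eqxx in nxa.
by rewrite IH // size_map mulSn addnA.
Qed.

Lemma val_mxvec_index m n (i : 'I_m) (j : 'I_n) :
  val (mxvec_index i j) = (i * n + j)%N.
Proof.
rewrite /mxvec_index /=.
have rank_index : index (i, j) (enum {: 'I_m * 'I_n}) = enum_rank (i, j).
  by rewrite -{1}(nth_enum_rank (i, j) (i, j)) index_uniq ?enum_uniq // -cardT.
rewrite -rank_index enumT unlock /= /prod_enum index_allpairs ?mem_enum //.
by rewrite !index_enum_ord size_enum_ord.
Qed.

Lemma deriv_eq0_hornerE {R : numDomainType} {p : {poly R}} :
  p^`() = 0 -> forall a b, p.[a] = p.[b].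
Proof.
move=> Dp0 a b; have -> : p = (p`_0)%:P; last by rewrite !hornerC.
apply/polyP => -[|i]; rewrite coefC //=.
have /eqP := congr1 (fun r : {poly R} => r`_i) Dp0.
by rewrite coef_deriv coef0 mulrn_eq0 /= => /eqP.
Qed.

Section PolyIntegral.
Variable R : realFieldType.
Implicit Types p : {poly R}.

Lemma deriv_poly_antideriv p : (poly_antideriv p)^`() = p.
Proof.
apply/polyP => i; rewrite coef_deriv coef_poly ltnS /=.
case: ltnP => Hi; last by rewrite mul0rn nth_default.
by rewrite -[_ *+ i.+1]mulr_natr divfK // pnatr_eq0.
Qed.

Lemma poly_integral_comp_affine p c d u v : d != 0 ->
  poly_integral p (c + d * u) (c + d * v) =
  d * poly_integral (p \Po (c%:P + d *: 'X)) u v.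
Proof.
move=> d0; set L := c%:P + d *: 'X.
set P := poly_antideriv p; set Q := poly_antideriv (p \Po L).
have hornerL x : L.[x] = c + d * x by rewrite /L hornerD hornerC hornerZ hornerX.
have D0 : (P \Po L - d *: Q)^`() = 0.
  rewrite derivB deriv_comp derivZ /Q /P !deriv_poly_antideriv /L.
  by rewrite derivD derivC derivZ derivX add0r alg_polyC mulrC mul_polyC subrr.
have := deriv_eq0_hornerE D0 u v.
rewrite !hornerD !hornerN !hornerZ !horner_comp !hornerL /poly_integral -/P -/Q.
by move=> E; lra.
Qed.

End PolyIntegral.

Section PrefixSums.
Variable V : nmodType.

Lemma sum_ord_leq0 n (d : 'I_n -> V) (n_gt0 : (0 < n)%N) :
  \sum_(j < n | (j <= 0)%N) d j = d (Ordinal n_gt0).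
Proof. by rewrite (big_pred1 (Ordinal n_gt0)) // => j; rewrite /= leqn0 -val_eqE. Qed.

Lemma sum_ord_leqS n (d : 'I_n -> V) i (Hi : (i.+1 < n)%N) :
  \sum_(j < n | (j <= i.+1)%N) d j = \sum_(j < n | (j <= i)%N) d j + d (Ordinal Hi).
Proof.
rewrite (bigD1 (Ordinal Hi)) //= addrC; congr (_ + _); apply: eq_bigl => j.
rewrite -val_eqE /=; case: (eqVneq (val j) i.+1) => [->|ne].
  by rewrite ltnn andbF.
by rewrite andbT leq_eqVlt (negbTE ne).
Qed.

End PrefixSums.

Lemma indc_prev_recurrenceP {R : realFieldType} {M K : nat}
    (Y : 'I_K.+1 -> 'I_M -> R) (k : 'I_K.+1) (d : 'I_M -> R) (yn : R) :
  (forall j, Y k j = indc_prev yn Y k j + d j) <->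
  (forall i, Y k i = yn + \sum_(j < M | (j <= i)%N) d j).
Proof.
split=> Yk [m]; elim: m => [|m IH] Hm.
- by rewrite {1}Yk /= sum_ord_leq0.
- by rewrite {1}Yk /= (IH (ltnW Hm)) sum_ord_leqS addrA.
- by rewrite {1}Yk /= sum_ord_leq0.
- by rewrite {1}Yk /= (Yk (Ordinal (ltnW Hm))) sum_ord_leqS addrA.
Qed.

Lemma alpha_comp_affine (R : realFieldType) M (tn H : R) (j : 'I_M) : H != 0 ->
  alpha tn H j \Po (tn%:P + H *: 'X) = ell R j.
Proof.
move=> H0; rewrite /alpha /ell /lagrange_basis rmorph_prod /=.
apply: eq_bigr => i _; rewrite comp_polyZ comp_polyB comp_polyX comp_polyC /tau.
have -> : tn%:P + H *: 'X - (tn + i.+1%:R * (H / M%:R))%:P =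
          H *: ('X - (i.+1%:R / M%:R)%:P).
  by rewrite -!mul_polyC !(rmorphD, rmorphB, rmorphM) /=; ring.
rewrite scalerA; congr (_ *: _).
have -> : tn + j.+1%:R * (H / M%:R) - (tn + i.+1%:R * (H / M%:R)) =
          H * (j.+1%:R / M%:R - i.+1%:R / M%:R) by ring.
by rewrite invfM mulrAC mulVf // mul1r.
Qed.

Lemma sum_Sop_leq (R : realFieldType) M (tn H : R) (w : 'I_M -> R) (i : 'I_M) :
  H != 0 -> (0 < M)%N ->
  \sum_(m < M | (m <= i)%N) H / M%:R * Sop tn H m w =
  H * \sum_(j < M) w j * Stilde R i j.
Proof.
move=> H0 M_gt0.
have h0 : H / M%:R != 0 by rewrite mulf_neq0 // invr_eq0 pnatr_eq0 -lt0n.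
pose I (j : 'I_M) m := poly_integral (alpha tn H j) (tau M tn H m) (tau M tn H m.+1).
rewrite /Sop; under eq_bigr => m _ do rewrite mulVKf //.
rewrite exchange_big mulr_sumr; apply: eq_bigr => j _.
rewrite -mulr_sumr mulrCA; congr (w j * _).
rewrite (eq_bigl (fun m : 'I_M => (m < i.+1)%N)) //.
rewrite -(big_ord_widen M (I j) (ltn_ord i)) -(big_mkord xpredT (I j)) /I /poly_integral.
rewrite (telescope_sumr (fun m => (poly_antideriv (alpha tn H j)).[tau M tn H m])) //.
have -> : tau M tn H 0 = tn + H * 0 by rewrite /tau mul0r mulr0.
have -> : tau M tn H i.+1 = tn + H * (i.+1%:R / M%:R) by rewrite /tau; ring.
by rewrite -/(poly_integral _ _ _) poly_integral_comp_affine // alpha_comp_affine.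
Qed.

Section Tableau.
Variable R : realFieldType.

Definition indc_block {M} (k l : nat) (i j : 'I_M) : R :=
  if k == l then Tmat R i j else if k == l.+1 then Pmat R i j else 0.

Definition indc_tableau K M : 'M[R]_(K.+1 * M) :=
  \matrix_(p, q)
    (let x := enum_val (cast_ord (esym (@mxvec_cast K.+1 M)) p) in
     let y := enum_val (cast_ord (esym (@mxvec_cast K.+1 M)) q) in
     indc_block (val x.1) (val y.1) x.2 y.2).

Lemma indc_tableauE K M k i l j :
  indc_tableau K M (mxvec_index k i) (mxvec_index l j) = indc_block k l i j.
Proof. by rewrite mxE /mxvec_index !cast_ordK !enum_rankK. Qed.

Lemma Pmat_Stilde M (i j : 'I_M) : Pmat R i j = Stilde R i j - Tmat R i j.
Proof. by rewrite /Pmat /Tmat; case: ifP; rewrite ?subr0. Qed.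

Lemma mulr_sum_Tmat M (H : R) (g : 'I_M -> R) (i : 'I_M) :
  H * \sum_(j < M) Tmat R i j * g j = \sum_(j < M | (j <= i)%N) H / M%:R * g j.
Proof.
rewrite mulr_sumr [RHS]big_mkcond /=; apply: eq_bigr => j _.
by rewrite /Tmat; case: ifP => _; rewrite ?mul0r ?mulr0 // mulrA.
Qed.

Lemma sum_indc_block0 K M (F : 'I_K.+1 -> 'I_M -> R) (i : 'I_M) :
  \sum_(l < K.+1) \sum_(j < M) indc_block 0 l i j * F l j =
  \sum_(j < M) Tmat R i j * F ord0 j.
Proof.
rewrite (bigD1 ord0) //= [X in _ + X]big1 ?addr0 => [|l /negbTE l_neq0].
  by apply: eq_bigr => j _; rewrite /indc_block eqxx.
apply: big1 => j _; rewrite /indc_block eq_sym.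
have -> : (l == 0 :> nat) = false by apply: l_neq0.
by rewrite mul0r.
Qed.

Lemma sum_indc_blockS K M (F : 'I_K.+1 -> 'I_M -> R) (k : 'I_K) (i : 'I_M) :
  \sum_(l < K.+1) \sum_(j < M) indc_block k.+1 l i j * F l j =
  \sum_(j < M) Tmat R i j * F (lift ord0 k) j +
  \sum_(j < M) Pmat R i j * F (widen_ord (leqnSn K) k) j.
Proof.
have bump0 : bump 0 k = k.+1 by rewrite /bump leq0n.
have widen_neq : widen_ord (leqnSn K) k != lift ord0 k.
  by apply/eqP => /(congr1 val); rewrite /= bump0; lia.
rewrite (bigD1 (lift ord0 k)) //= (bigD1 (widen_ord (leqnSn K) k)) //=.
rewrite [X in _ + (_ + X)]big1 ?addr0 => [|l /andP [l_neq_lift l_neq_widen]].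
  congr (_ + _); apply: eq_bigr => j _; rewrite /indc_block /= ?bump0 eqxx //=.
  by have -> : (k.+1 == k) = false by lia.
apply: big1 => j _; rewrite /indc_block.
have -> : (k.+1 == l) = false.
  by apply/negbTE; apply: contra l_neq_lift => /eqP E; apply/eqP/val_inj; rewrite /= bump0.
have -> : (k.+1 == l.+1) = false.
  by rewrite eqSS; apply/negbTE; apply: contra l_neq_widen => /eqP E; apply/eqP/val_inj.
by rewrite mul0r.
Qed.

Lemma sum_indc_correction K M (tn H : R) (F : 'I_K.+1 -> 'I_M -> R)
    (k : 'I_K) (i : 'I_M) : H != 0 -> (0 < M)%N ->
  let Fnew := F (lift ord0 k) in let Fold := F (widen_ord (leqnSn K) k) in
  \sum_(j < M | (j <= i)%N)
     (H / M%:R * (Fnew j - Fold j) + H / M%:R * Sop tn H j Fold) =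
  H * \sum_(l < K.+1) \sum_(j < M) indc_block (lift ord0 k) l i j * F l j.
Proof.
move=> H0 M_gt0 Fnew Fold.
rewrite /= /bump leq0n add1n sum_indc_blockS mulrDr mulr_sum_Tmat big_split /=.
rewrite sum_Sop_leq //.
under [X in _ = _ + _ * X]eq_bigr => j _ do rewrite Pmat_Stilde mulrBl.
rewrite sumrB mulrBr mulr_sum_Tmat.
under eq_bigr => j _ do rewrite mulrBr.
rewrite sumrB.
have -> : \sum_(j < M) Fold j * Stilde R i j = \sum_(j < M) Stilde R i j * Fold j.
  by apply: eq_bigr => j _; rewrite mulrC.
lra.
Qed.

Lemma indc_tableau_trig K M : is_trig_mx (indc_tableau K M).
Proof.
apply/is_trig_mxP => p q; case/mxvec_indexP: p => k i; case/mxvec_indexP: q => l j.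
rewrite !val_mxvec_index => lt_ki_lj; rewrite indc_tableauE /indc_block.
case: (eqVneq (k : nat) l) => [k_eq_l|_].
  by rewrite k_eq_l ltn_add2l in lt_ki_lj; rewrite /Tmat leqNgt lt_ki_lj.
case: (eqVneq (k : nat) l.+1) => [k_eq_Sl|//].
by rewrite k_eq_Sl mulSn in lt_ki_lj; have := ltn_ord j; lia.
Qed.

Lemma indc_tableau_unit K M : (0 < M)%N -> indc_tableau K M \in unitmx.
Proof.
move=> M_gt0; rewrite unitmxE unitfE det_trig ?indc_tableau_trig //.
apply/prodf_neq0 => p _; case/mxvec_indexP: p => k i.
by rewrite indc_tableauE /indc_block eqxx /Tmat leqnn invr_eq0 pnatr_eq0 -lt0n.
Qed.

Lemma indc_tableau_blockA1 M (k l : 'I_2) (i j : 'I_M) :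
  indc_tableau 1 M (mxvec_index k i) (mxvec_index l j) = blockA1 R k l i j.
Proof.
by rewrite indc_tableauE /indc_block /blockA1; case: k => -[|[|]] //; case: l => -[|[|]].
Qed.

End Tableau.

Lemma forall_ord_liftP {n} (P : 'I_n.+1 -> Prop) :
  (forall k, P k) <-> P ord0 /\ forall k : 'I_n, P (lift ord0 k).
Proof.
split=> [Pk|[P0 PS] k]; first by split.
by case: (unliftP ord0 k) => [k' ->|->].
Qed.

Section Equivalence.
Variables (R : realFieldType) (M K : nat) (f : R -> R) (tn H yn : R).
Hypotheses (M_gt0 : (0 < M)%N) (H_gt0 : 0 < H).
Implicit Types Y : 'I_K.+1 -> 'I_M -> R.

Let A := indc_tableau R K M.

Lemma RK_stages_indc_tableauP Y : RK_stages A f H yn Y <->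
  forall k i, Y k i = yn + H * \sum_(l < K.+1) \sum_(j < M)
                                 indc_block R k l i j * f (Y l j).
Proof.
split=> Y_eq k i; rewrite Y_eq; congr (_ + _ * _);
by apply: eq_bigr => l _; apply: eq_bigr => j _; rewrite indc_tableauE.
Qed.

Lemma InDC_BE_RK_stages Y : InDC_BE f tn H yn Y <-> RK_stages A f H yn Y.
Proof.
have H0 : H != 0 by rewrite gt_eqF.
set F := fun l j => f (Y l j).
rewrite RK_stages_indc_tableauP /InDC_BE /=.
rewrite (forall_ord_liftP (fun k => forall i, _)).
pose Fold (k : 'I_K) := F (widen_ord (leqnSn K) k).
pose dS (k : 'I_K) (j : 'I_M) :=
  H / M%:R * (F (lift ord0 k) j - Fold k j) + H / M%:R * Sop tn H j (Fold k).
have correctionE k : (forall j, Y (lift ord0 k) j = indc_prev yn Y (lift ord0 k) j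
        + H / M%:R * (F (lift ord0 k) j - Fold k j) + H / M%:R * Sop tn H j (Fold k))
    <-> forall j, Y (lift ord0 k) j = indc_prev yn Y (lift ord0 k) j + dS k j.
  by split=> Y_eq j; rewrite Y_eq addrA.
have predictionP := indc_prev_recurrenceP Y ord0 (fun j => H / M%:R * F ord0 j) yn.
have correctionP k := iff_trans (correctionE k) (indc_prev_recurrenceP Y _ (dS k) yn).
split=> -[Y0 YS]; split.
- by move=> i; rewrite (predictionP.1 Y0) sum_indc_block0 mulr_sum_Tmat.
- by move=> k i; rewrite ((correctionP k).1 (YS k)) sum_indc_correction.
- by apply/predictionP => i; rewrite Y0 sum_indc_block0 mulr_sum_Tmat.
- by move=> k; apply/(correctionP k) => i; rewrite YS sum_indc_correction.
Qed.

End Equivalence.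

Theorem proposition4p1 (R : realFieldType) (M K : nat) (HM : (0 < M)%N) :
  exists (A : 'M[R]_(K.+1 * M)) (b : 'rV[R]_(K.+1 * M)),
    (forall (f : R -> R) (tn H yn : R) (Y : 'I_K.+1 -> 'I_M -> R), 0 < H ->
       (InDC_BE f tn H yn Y <-> RK_stages A f H yn Y) /\
       (InDC_BE f tn H yn Y ->
          forall jlast : 'I_M, val jlast = M.-1 ->
            RK_output b f H yn Y = Y ord_max jlast)) /\
    (forall jlast : 'I_M, val jlast = M.-1 -> b = row (mxvec_index ord_max jlast) A) /\
    A \in unitmx /\
    (K = 1%N -> forall (k l : 'I_K.+1) (i j : 'I_M),
        A (mxvec_index k i) (mxvec_index l j) = @blockA1 R M k l i j).
Proof.
have lastM : (M.-1 < M)%N by rewrite prednK.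
have lastE (jl : 'I_M) : val jl = M.-1 -> jl = Ordinal lastM by move=> E; apply: val_inj.
set A := indc_tableau R K M.
set b := row (mxvec_index ord_max (Ordinal lastM)) A.
exists A, b; split; [|split; [|split]].
- move=> f tn H yn Y H_gt0.
  have stagesP := @InDC_BE_RK_stages R M K f tn H yn HM H_gt0 Y.
  split=> // /stagesP RK_Y jl /lastE ->.
  rewrite (RK_Y ord_max (Ordinal lastM)) /RK_output; congr (_ + _ * _).
  by apply: eq_bigr => l _; apply: eq_bigr => j _; rewrite mxE.
- by move=> jl /lastE ->.
- exact: indc_tableau_unit.
- by move=> K1; subst K; exact: indc_tableau_blockA1.
Qed.
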